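(* Let $\Bbbk$ be a complete valuation field, $A$ a unital $\Bbbk$-Banach algebra and $a\in A$. Let $\tilde\Upsilon:\mathbb A^1_\Bbbk\to\mathbb A$ be the map $\gamma\mapsto\gamma\circ\Upsilon$, where $\Upsilon:\mathbb Z[t]\to\Bbbk[t]$ is the canonical ring homomorphism. Then $\tilde\Upsilon(\Sigma_A(a))=\sigma^{\mathrm{Ber}}_{A,\Bbbk}(a)$ and $\tilde\Upsilon(\Sigma^{\mathrm{um}}_A(a))=\sigma^{\mathrm{um}}_{A,\Bbbk}(a)$.
   Context: A unital $\Bbbk$-Banach algebra is a unital Banach ring $A$ ($\|1\|=1$, submultiplicative complete norm) with a contractive unital ring homomorphism from $\Bbbk$ into the center of $A$. $\mathbb A$ is the set of non-zero multiplicative semi-norms on $\mathbb Z[t]$; for a complete valuation field $K$ and $s\in K$, $\mu_K(s)\in\mathbb A$ is $p\mapsto|p(s)|_K$. $\mathbb A^1_\Bbbk$ is the set of multiplicative semi-norms $\gamma$ on $\Bbbk[t]$ with $\gamma(c)\le|c|_\Bbbk$ for $c\in\Bbbk$ (then $\gamma(c)=|c|_\Bbbk$), with pointwise convergence topology; for $\gamma\in\mathbb A^1_\Bbbk$, $\mathcal H(\gamma)$ is the completion of the fraction field of $\Bbbk[t]/\ker\gamma$ w.r.t. the absolute value induced by $\gamma$ (an extension of $\Bbbk$) and $\varphi_\gamma:\Bbbk[t]\to\mathcal H(\gamma)$ the canonical map. An extension of $\Bbbk$ is a complete valuation field $K$ with an isometric field embedding $\Bbbk\to K$. For a $\Bbbk$-Banach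 algebra $A$ and extension $K$, $A\hat\otimes_\Bbbk K$ and $A\hat\otimes^{\mathrm{um}}_\Bbbk K$ are the completions of $A\otimes_\Bbbk K$ modulo the kernels of $\|z\|_\wedge=\inf\sum\|a_k\||b_k|$ and $\|z\|^{\mathrm{um}}_\wedge=\inf\max\|a_k\||b_k|$ respectively (infima over representations $z=\sum a_k\otimes b_k$). Define $\Sigma_A(a):=\{\gamma\in\mathbb A^1_\Bbbk: 1\otimes\varphi_\gamma(t)-a\otimes1$ not invertible in $A\hat\otimes_\Bbbk\mathcal H(\gamma)\}$; $\Sigma^{\mathrm{um}}_A(a):=\{\gamma\in\mathbb A^1_\Bbbk: A\hat\otimes^{\mathrm{um}}_\Bbbk\mathcal H(\gamma)\ne(0)$ and $1\otimes\varphi_\gamma(t)-a\otimes1$ not invertible there$\}$; $\sigma^{\mathrm{Ber}}_{A,\Bbbk}(a):=\{\mu_K(s):K$ extension of $\Bbbk$, $s\in K$, $1\otimes s-a\otimes1$ not invertible in $A\hat\otimes_\Bbbk K\}$; $\sigma^{\mathrm{um}}_{A,\Bbbk}(a):=\{\mu_K(s):K$ extension of $\Bbbk$, $s\in K$, $A\hat\otimes^{\mathrm{um}}_\Bbbk K\ne(0)$, $1\otimes s-a\otimes1$ not invertible in $A\hat\otimes^{\mathrm{um}}_\Bbbk K\}$. *)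

From Stdlib Require Import Reals Relation_Operators.
From HB Require Import structures.
From mathcomp Require Import all_boot all_order all_algebra.
Set Implicit Arguments. Unset Strict Implicit. Unset Printing Implicit Defensive.
Import GRing.Theory.
Local Open Scope ring_scope.

Definition cauchy_seq {X : Type} (d : X -> X -> R) (u : nat -> X) : Prop :=
  forall e, Rlt R0 e -> exists N : nat, forall m n : nat, (N <= m)%N -> (N <= n)%N ->
    Rlt (d (u m) (u n)) e.
Definition converges_to {X : Type} (d : X -> X -> R) (u : nat -> X) (l : X) : Prop :=
  forall e, Rlt R0 e -> exists N : nat, forall n : nat, (N <= n)%N -> Rlt (d (u n) l) e.
Definition complete_for {X : Type} (d : X -> X -> R) : Prop :=
  forall u, cauchy_seq d u -> exists l, converges_to d u l.

Record ValField := {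
  vf_car :> fieldType;
  vf_abs : vf_car -> R;
  vf_abs_ge0 : forall x, Rle R0 (vf_abs x);
  vf_abs_eq0 : forall x, vf_abs x = R0 <-> x = 0;
  vf_absM : forall x y, vf_abs (x * y) = Rmult (vf_abs x) (vf_abs y);
  vf_absD : forall x y, Rle (vf_abs (x + y)) (Rplus (vf_abs x) (vf_abs y));
  vf_complete : complete_for (fun x y => vf_abs (x - y)) }.

Record Ext (k : ValField) := {
  ext_fld :> ValField;
  ext_emb : {rmorphism (vf_car k) -> (vf_car ext_fld)};
  ext_isom : forall c, @vf_abs ext_fld (ext_emb c) = @vf_abs k c }.

(* The k-algebra structure (algType) is a unital ring hom k -> center(A),
   c |-> c%:A; it is required to be contractive. *)
Record BanachAlg (k : ValField) := {
  ba_car :> algType (vf_car k);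
  ba_norm : ba_car -> R;
  ba_norm_ge0 : forall x, Rle R0 (ba_norm x);
  ba_norm_eq0 : forall x, ba_norm x = R0 <-> x = 0;
  ba_normN : forall x, ba_norm (- x) = ba_norm x;
  ba_normD : forall x y, Rle (ba_norm (x + y)) (Rplus (ba_norm x) (ba_norm y));
  ba_normM : forall x y, Rle (ba_norm (x * y)) (Rmult (ba_norm x) (ba_norm y));
  ba_norm1 : ba_norm 1 = R1;
  ba_contr : forall c : vf_car k, Rle (ba_norm (c%:A)) (@vf_abs k c);
  ba_complete : complete_for (fun x y => ba_norm (x - y)) }.

Section Tensor.
Variables (k : ValField) (A : BanachAlg k) (L : Ext k).

(* a formal sum  sum_i a_i (x) b_i  *)
Definition tens := seq (ba_car A * vf_car L).

(* elementary relations generating the tensor product (over k, where k acts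
   on K through the embedding) *)
Inductive tstep : tens -> tens -> Prop :=
| ts_addl (a1 a2 : ba_car A) (b : vf_car L) : tstep [:: (a1 + a2, b)] [:: (a1, b); (a2, b)]
| ts_addr (a : ba_car A) (b1 b2 : vf_car L) : tstep [:: (a, b1 + b2)] [:: (a, b1); (a, b2)]
| ts_scal (c : vf_car k) (a : ba_car A) (b : vf_car L) :
    tstep [:: (c *: a, b)] [:: (a, ext_emb L c * b)]
| ts_zero (b : vf_car L) : tstep [:: (0, b)] [::]
| ts_swap (x y : ba_car A * vf_car L) : tstep [:: x; y] [:: y; x].

Definition tcong (z w : tens) : Prop :=
  exists u v x y, tstep x y /\ z = u ++ x ++ v /\ w = u ++ y ++ v.

Definition teq : tens -> tens -> Prop := clos_refl_sym_trans tens tcong.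

Definition tsub (z w : tens) : tens := z ++ [seq (- p.1, p.2) | p <- w].
Definition tmul (z w : tens) : tens := [seq (p.1 * q.1, p.2 * q.2) | p <- z, q <- w].
Definition tone : tens := [:: (1, 1)].

Definition cost_sum (w : tens) : R :=
  foldr (fun p r => Rplus (Rmult (@ba_norm k A p.1) (@vf_abs L p.2)) r) R0 w.
Definition cost_max (w : tens) : R :=
  foldr (fun p r => Rmax (Rmult (@ba_norm k A p.1) (@vf_abs L p.2)) r) R0 w.

(* ||z|| < e for the seminorm  ||z|| = inf over representations of cost *)
Definition snorm_lt (cost : tens -> R) (z : tens) (e : R) : Prop :=
  exists w, teq w z /\ Rlt (cost w) e.

(* x (an element of A (x)_k K) is invertible in the completion of
   (A (x)_k K)/ker||.||: there is y in the completion, i.e. a Cauchy sequence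
   u_n in A (x)_k K, with x y = 1 = y x, i.e. ||x u_n - 1|| -> 0 and
   ||u_n x - 1|| -> 0. *)
Definition cinvertible (cost : tens -> R) (x : tens) : Prop :=
  exists u : nat -> tens,
    (forall e, Rlt R0 e -> exists N : nat, forall m n : nat, (N <= m)%N -> (N <= n)%N ->
        snorm_lt cost (tsub (u m) (u n)) e) /\
    (forall e, Rlt R0 e -> exists N : nat, forall n : nat, (N <= n)%N ->
        snorm_lt cost (tsub (tmul x (u n)) tone) e /\
        snorm_lt cost (tsub (tmul (u n) x) tone) e).

(* the completion is not the zero ring: some element has nonzero seminorm *)
Definition cnonzero (cost : tens -> R) : Prop :=
  exists z e, Rlt R0 e /\ ~ snorm_lt cost z e.

Definition res_elt (a : ba_car A) (s : vf_car L) : tens := [:: (1, s); (- a, 1)].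

End Tensor.

Definition mult_seminorm (Rg : nzRingType) (g : Rg -> R) : Prop :=
  (forall x, Rle R0 (g x)) /\ g 0 = R0 /\ (forall x, g (- x) = g x) /\
  (forall x y, Rle (g (x + y)) (Rplus (g x) (g y))) /\
  (forall x y, g (x * y) = Rmult (g x) (g y)).

Definition in_AA (f : {poly int} -> R) : Prop :=
  mult_seminorm f /\ exists p, f p <> R0.

Definition in_A1 (k : ValField) (g : {poly (vf_car k)} -> R) : Prop :=
  mult_seminorm g /\ forall c : vf_car k, Rle (g c%:P) (@vf_abs k c).

Definition mu (K : ValField) (s : vf_car K) : {poly int} -> R :=
  fun p => @vf_abs K (map_poly (fun z : int => z%:~R) p).[s].

Definition Upsilon (k : ValField) (p : {poly int}) : {poly (vf_car k)} :=
  map_poly (fun z : int => z%:~R) p.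
Definition Upsilon_tilde (k : ValField) (g : {poly (vf_car k)} -> R) : {poly int} -> R :=
  fun p => g (Upsilon k p).

(* (L, phi) is a model of (H(gamma), phi_gamma): L is an extension of k (complete),
   phi : k[t] -> L a ring hom extending k -> L with |phi p| = gamma p, whose
   induced image of Frac(k[t]/ker gamma) = {phi p / phi q} is dense in L. *)
Definition Hmodel (k : ValField) (g : {poly (vf_car k)} -> R) (L : Ext k)
    (phi : {rmorphism {poly (vf_car k)} -> vf_car L}) : Prop :=
  (forall c, phi c%:P = ext_emb L c) /\
  (forall p, @vf_abs L (phi p) = g p) /\
  (forall (x : vf_car L) e, Rlt R0 e -> exists p q,
      phi q <> 0 /\ Rlt (@vf_abs L (x - phi p / phi q)) e).

Definition Sigma (k : ValField) (A : BanachAlg k) (a : ba_car A)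
    (g : {poly (vf_car k)} -> R) : Prop :=
  in_A1 g /\ exists (L : Ext k) phi, @Hmodel k g L phi /\
    ~ cinvertible (@cost_sum k A L) (@res_elt k A L a (phi 'X)).

Definition Sigma_um (k : ValField) (A : BanachAlg k) (a : ba_car A)
    (g : {poly (vf_car k)} -> R) : Prop :=
  in_A1 g /\ exists (L : Ext k) phi, @Hmodel k g L phi /\
    cnonzero (@cost_max k A L) /\
    ~ cinvertible (@cost_max k A L) (@res_elt k A L a (phi 'X)).

Definition sigma_Ber (k : ValField) (A : BanachAlg k) (a : ba_car A)
    (f : {poly int} -> R) : Prop :=
  exists (K : Ext k) (s : vf_car K), f = @mu K s /\
    ~ cinvertible (@cost_sum k A K) (@res_elt k A K a s).

Definition sigma_um (k : ValField) (A : BanachAlg k) (a : ba_car A)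
    (f : {poly int} -> R) : Prop :=
  exists (K : Ext k) (s : vf_car K), f = @mu K s /\
    cnonzero (@cost_max k A K) /\
    ~ cinvertible (@cost_max k A K) (@res_elt k A K a s).

(* A point gamma of Sigma_A(a) comes with a model (H(gamma), phi) of its residue field, and
   gamma o Upsilon = mu_{H(gamma)}(phi t) because phi commutes with evaluating integer
   polynomials at t.  Conversely, for a point mu_K(s) of the Berkovich spectrum put
   gamma(p) := |p(s)|_K; then H(gamma) is realised as the closure of k(s) inside K.  The
   inclusion of that closure into K is an isometric k-embedding, so it maps representations
   of tensors to representations of the same cost; hence invertibility of 1 (x) s - a (x) 1
   over H(gamma) would imply invertibility over K.  In the uniform case the non-vanishing of
   the completed tensor product comes for free: over the zero ring everything is invertible. *)
From Stdlib Require Import Reals Lra ClassicalEpsilon FunctionalExtensionality Classical Relation_Operators.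
From HB Require Import structures.
From mathcomp Require Import all_boot all_order all_algebra.
Set Implicit Arguments. Unset Strict Implicit. Unset Printing Implicit Defensive.
Import GRing.Theory.

Section RealFacts.
Local Open Scope R_scope.

Lemma exists_small_pos (m c e : R) : 0 < m -> 0 < c -> 0 < e ->
  exists d, 0 < d /\ d <= m /\ d * c < e.
Proof.
move=> hm hc he; exists (Rmin m (e / (2 * c))); split; [|split].
- by apply: Rmin_glb_lt; [|apply: Rdiv_lt_0_compat]; lra.
- exact: Rmin_l.
- apply: (Rle_lt_trans _ (e / (2 * c) * c)).
    by apply: Rmult_le_compat_r; [lra | apply: Rmin_r].
  have -> : e / (2 * c) * c = e / 2 by field; lra.
  lra.
Qed.

Lemma Rmult_inv_lt (x r t e : R) : 0 < r -> 0 < t -> x < e * (r * t) ->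
  x * (/ r * / t) < e.
Proof.
move=> hr ht h; apply: (Rmult_lt_reg_r (r * t)); first nra.
by have -> : x * (/ r * / t) * (r * t) = x by field; lra.
Qed.

End RealFacts.

(* Imported only now: its [ring] and [field] shadow the Stdlib tactics on [R] used above. *)
From mathcomp Require Import ring.

Local Open Scope ring_scope.

Section ValFieldTheory.
Variable K : ValField.
Implicit Types x y z : vf_car K.

Lemma vf_abs0 : vf_abs (0 : vf_car K) = R0.
Proof. exact/vf_abs_eq0. Qed.

Lemma vf_abs_neq0 x : x != 0 -> vf_abs x <> R0.
Proof. by move=> /eqP hx /vf_abs_eq0. Qed.

Lemma vf_abs_gt0 x : x != 0 -> Rlt R0 (vf_abs x).
Proof. by move=> /vf_abs_neq0 hx; have := vf_abs_ge0 x; lra. Qed.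

Lemma vf_abs1 : vf_abs (1 : vf_car K) = R1.
Proof.
have h := vf_absM (1 : vf_car K) 1; rewrite mulr1 in h.
apply: (Rmult_eq_reg_l (vf_abs (1 : vf_car K))); last exact: vf_abs_neq0 (oner_neq0 _).
by rewrite Rmult_1_r -h.
Qed.

Lemma vf_absN x : vf_abs (- x) = vf_abs x.
Proof.
have h := vf_absM (-1 : vf_car K) (-1); rewrite mulrNN mulr1 vf_abs1 in h.
have h0 := vf_abs_ge0 (-1 : vf_car K).
have e1 : vf_abs (-1 : vf_car K) = R1 by nra.
by rewrite -mulN1r vf_absM e1 Rmult_1_l.
Qed.

Lemma vf_absV x : x != 0 -> vf_abs x^-1 = Rinv (vf_abs x).
Proof.
move=> hx; have h := vf_absM x x^-1; rewrite mulfV // vf_abs1 in h.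
apply: (Rmult_eq_reg_l (vf_abs x)); last exact: vf_abs_neq0.
by rewrite -h Rinv_r //; apply: vf_abs_neq0.
Qed.

Lemma vf_distC x y : vf_abs (x - y) = vf_abs (y - x).
Proof. by rewrite -vf_absN opprB. Qed.

Lemma vf_distD x y z : Rle (vf_abs (x - z)) (Rplus (vf_abs (x - y)) (vf_abs (y - z))).
Proof. by rewrite -(subrKA y); apply: vf_absD. Qed.

Lemma vf_abs_le_dist x y : Rle (vf_abs x) (Rplus (vf_abs (x - y)) (vf_abs y)).
Proof. by have := vf_distD x y 0; rewrite !subr0. Qed.

Lemma vf_abs_mulB x y x' y' : Rle (vf_abs (x * y - x' * y'))
  (Rplus (Rmult (vf_abs x) (vf_abs (y - y'))) (Rmult (vf_abs (x - x')) (vf_abs y'))).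
Proof.
have -> : x * y - x' * y' = x * (y - y') + (x - x') * y' by ring.
by rewrite -!vf_absM; apply: vf_absD.
Qed.

Lemma vf_abs_invB x y : x != 0 -> y != 0 ->
  vf_abs (x^-1 - y^-1) = Rmult (vf_abs (x - y)) (Rmult (/ vf_abs x) (/ vf_abs y)).
Proof.
move=> hx hy; have -> : x^-1 - y^-1 = (y - x) * (x^-1 * y^-1) by field; apply/andP.
by rewrite !vf_absM !vf_absV // vf_distC.
Qed.

End ValFieldTheory.

Section Closure.
Variables (K : ValField) (D : vf_car K -> Prop).

Definition in_closure (x : vf_car K) : Prop :=
  forall e, Rlt R0 e -> exists y, D y /\ Rlt (vf_abs (x - y)) e.

Lemma in_closure_of x : D x -> in_closure x.
Proof. by move=> Dx e he; exists x; rewrite subrr vf_abs0. Qed.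

Lemma in_closure_lim (u : nat -> vf_car K) l : (forall n, in_closure (u n)) ->
  converges_to (fun x y => vf_abs (x - y)) u l -> in_closure l.
Proof.
move=> hu hl e he; have he2 : Rlt R0 (e / 2) by lra.
have [N hN] := hl _ he2; have [y [Dy hy]] := hu N _ he2.
exists y; split => //; apply: Rle_lt_trans (vf_distD l (u N) y) _.
by rewrite -(Rplus_half_diag e); apply: Rplus_lt_compat; rewrite // vf_distC; apply: hN.
Qed.

Hypotheses (D1 : D 1) (DB : forall x y, D x -> D y -> D (x - y))
  (DM : forall x y, D x -> D y -> D (x * y)) (DV : forall x, D x -> x != 0 -> D x^-1).

Lemma in_closureB x y : in_closure x -> in_closure y -> in_closure (x - y).
Proof.
move=> hx hy e he; have he2 : Rlt R0 (e / 2) by lra.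
have [x' [Dx hx']] := hx _ he2; have [y' [Dy hy']] := hy _ he2.
exists (x' - y'); split; first exact: DB.
have -> : x - y - (x' - y') = (x - x') + - (y - y') by ring.
by have := vf_absD (x - x') (- (y - y')); rewrite vf_absN; lra.
Qed.

Lemma in_closure0 : in_closure 0.
Proof. by rewrite -(subrr 1); apply: in_closureB; apply: in_closure_of. Qed.

Lemma in_closureM x y : in_closure x -> in_closure y -> in_closure (x * y).
Proof.
move=> hx hy e he.
have [d [hd [hd1 hde]]] :=
  @exists_small_pos R1 (Rplus (Rplus (vf_abs x) (vf_abs y)) R1) e Rlt_0_1
    ltac:(have := vf_abs_ge0 x; have := vf_abs_ge0 y; lra) he.
have [x' [Dx hx']] := hx _ hd; have [y' [Dy hy']] := hy _ hd.
exists (x' * y'); split; first exact: DM.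
apply: Rle_lt_trans (vf_abs_mulB x y x' y') _.
have hy'y := vf_abs_le_dist y' y; rewrite vf_distC in hy'y.
have := (vf_abs_ge0 x, vf_abs_ge0 (y - y'), vf_abs_ge0 (x - x'), vf_abs_ge0 y').
(* [set] merges copies of one absolute value elaborated through different structure
   paths, which [lra] would otherwise treat as distinct atoms. *)
set X := vf_abs x in hde *; set Y := vf_abs y in hde hy'y *.
set Y' := vf_abs y' in hy'y *; set Dx' := vf_abs (x - x') in hx' *.
set Dy' := vf_abs (y - y') in hy' hy'y *.
move=> [[[hX hDy] hDx] hY'].
have k1 : Rle (Rmult X Dy') (Rmult X d) by apply: Rmult_le_compat_l; lra.
have k2 : Rle (Rmult Dx' Y') (Rmult d (Rplus Y R1)) by apply: Rmult_le_compat; lra.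
lra.
Qed.

Lemma in_closureV x : in_closure x -> x != 0 -> in_closure x^-1.
Proof.
move=> hx nx e he; set r := vf_abs x.
have hr : Rlt R0 r := vf_abs_gt0 nx.
have [d [hd [hdr hde]]] :=
  @exists_small_pos (r / 2) R1 (Rmult e (Rmult r (r / 2))) ltac:(lra) Rlt_0_1
    ltac:(apply: Rmult_lt_0_compat => //; nra).
have [y [Dy hy]] := hx _ hd.
have hyr : Rle (r / 2) (vf_abs y) by have := vf_abs_le_dist x y; rewrite -/r; lra.
have ny : y != 0 by apply/eqP => y0; move: hyr; rewrite y0 vf_abs0; lra.
exists y^-1; split; first exact: DV.
rewrite vf_abs_invB //; apply: Rmult_inv_lt => //; first lra.
rewrite -/r; set t := vf_abs y in hyr *; set dxy := vf_abs (x - y) in hy *.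
have : Rle (Rmult e (Rmult r (r / 2))) (Rmult e (Rmult r t)).
  by apply: Rmult_le_compat_l; [lra | apply: Rmult_le_compat_l; lra].
lra.
Qed.

End Closure.

Section SubField.
Variables (F : fieldType) (S : divringClosed F).

Record subfield_of := SubFieldOf { subfield_val : F; subfield_valP : subfield_val \in S }.
HB.instance Definition _ := [isSub for subfield_val].
HB.instance Definition _ := [Choice of subfield_of by <:].
HB.instance Definition _ := [SubChoice_isSubUnitRing of subfield_of by <:].
HB.instance Definition _ := [SubNzRing_isSubComNzRing of subfield_of by <:].
HB.instance Definition _ := [SubComUnitRing_isSubIntegralDomain of subfield_of by <:].
HB.instance Definition _ := [SubIntegralDomain_isSubField of subfield_of by <:].

End SubField.

Section ClosureField.
Variables (K : ValField) (D : vf_car K -> Prop).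
Hypotheses (D1 : D 1) (DB : forall x y, D x -> D y -> D (x - y))
  (DM : forall x y, D x -> D y -> D (x * y)) (DV : forall x, D x -> x != 0 -> D x^-1).

Definition closure_mem : {pred vf_car K} :=
  fun x => if excluded_middle_informative (in_closure D x) then true else false.

Lemma closure_memP x : reflect (in_closure D x) (x \in closure_mem).
Proof. by rewrite unfold_in /closure_mem; case: excluded_middle_informative => h; constructor. Qed.

Lemma closure_mem_divring_closed : divring_closed closure_mem.
Proof.
split.
- by apply/closure_memP; apply: in_closure_of.
- by move=> x y /closure_memP hx /closure_memP hy; apply/closure_memP; apply: in_closureB.
- move=> x y /closure_memP hx /closure_memP hy; apply/closure_memP.
  have [->|ny] := eqVneq y 0; first by rewrite invr0 mulr0; apply: in_closure0.
  by apply: in_closureM => //; apply: in_closureV.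
Qed.

HB.instance Definition _ :=
  GRing.isDivringClosed.Build (vf_car K) closure_mem closure_mem_divring_closed.

Definition closure_abs (x : subfield_of closure_mem) : R := vf_abs (val x).

Lemma closure_abs_eq0 x : closure_abs x = R0 <-> x = 0.
Proof.
rewrite /closure_abs vf_abs_eq0; split => [h | ->]; last by rewrite rmorph0.
by apply: val_inj; rewrite h rmorph0.
Qed.

Lemma closure_absM x y : closure_abs (x * y) = Rmult (closure_abs x) (closure_abs y).
Proof. by rewrite /closure_abs rmorphM vf_absM. Qed.

Lemma closure_absD x y : Rle (closure_abs (x + y)) (Rplus (closure_abs x) (closure_abs y)).
Proof. by rewrite /closure_abs rmorphD; apply: vf_absD. Qed.

(* The limit in K of a Cauchy sequence of the closure lies in the closure. *)
Lemma closure_abs_complete : complete_for (fun x y => closure_abs (x - y)).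
Proof.
move=> u hu; have /vf_complete [l hl] : cauchy_seq (fun x y => vf_abs (x - y)) (val \o u).
  move=> e /hu [N hN]; exists N => m n hm hn.
  by have := hN m n hm hn; rewrite /closure_abs rmorphB.
have lP : l \in closure_mem.
  apply/closure_memP; apply: in_closure_lim hl => n; exact/closure_memP/(valP (u n)).
by exists (SubFieldOf lP) => e /hl [N hN]; exists N => n /hN; rewrite /closure_abs rmorphB.
Qed.

Definition closure_vf : ValField :=
  {| vf_car := subfield_of closure_mem; vf_abs := closure_abs;
     vf_abs_ge0 := fun x => vf_abs_ge0 (val x); vf_abs_eq0 := closure_abs_eq0;
     vf_absM := closure_absM; vf_absD := closure_absD;
     vf_complete := closure_abs_complete |}.

Definition closure_incl : {rmorphism vf_car closure_vf -> vf_car K} := val.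

Definition closure_elt x (Dx : D x) : vf_car closure_vf :=
  SubFieldOf (introT (closure_memP x) (in_closure_of Dx)).

End ClosureField.

Section GeneratedExtension.
Variables (k : ValField) (K : Ext k) (s : vf_car K).

Definition eval_at : {rmorphism {poly vf_car k} -> vf_car K} :=
  horner_eval s \o map_poly (ext_emb K).

Lemma eval_atC c : eval_at c%:P = ext_emb K c.
Proof. by rewrite /= horner_evalE map_polyC hornerC. Qed.

Lemma eval_atX : eval_at 'X = s.
Proof. by rewrite /= horner_evalE map_polyX hornerX. Qed.

Definition rat_in (y : vf_car K) : Prop :=
  exists p q, eval_at q != 0 /\ y = eval_at p / eval_at q.

Lemma rat_in_eval p : rat_in (eval_at p).
Proof. by exists p, 1; rewrite rmorph1 oner_neq0 divr1. Qed.

Lemma rat_in1 : rat_in 1.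
Proof. by rewrite -(rmorph1 eval_at); apply: rat_in_eval. Qed.

Lemma rat_inB x y : rat_in x -> rat_in y -> rat_in (x - y).
Proof.
move=> [p1 [q1 [h1 ->]]] [p2 [q2 [h2 ->]]].
exists (p1 * q2 - p2 * q1), (q1 * q2); rewrite !rmorphB !rmorphM mulf_neq0 //.
by split => //; field; apply/andP.
Qed.

Lemma rat_inM x y : rat_in x -> rat_in y -> rat_in (x * y).
Proof.
move=> [p1 [q1 [h1 ->]]] [p2 [q2 [h2 ->]]].
exists (p1 * p2), (q1 * q2); rewrite !rmorphM mulf_neq0 //.
by split => //; field; apply/andP.
Qed.

Lemma rat_inV x : rat_in x -> x != 0 -> rat_in x^-1.
Proof.
move=> [p [q [h ->]]] nz; exists q, p; rewrite invf_div; split => //.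
by apply: contraNneq nz => ->; rewrite mul0r.
Qed.

(* The completion of k(s), realised as the closure of k(s) inside K. *)
Definition gen_vf : ValField := closure_vf rat_in1 rat_inB rat_inM rat_inV.

Definition gen_eval (p : {poly vf_car k}) : vf_car gen_vf := closure_elt _ _ _ _ (rat_in_eval p).

Lemma gen_eval_is_zmod_morphism : zmod_morphism gen_eval.
Proof. by move=> p q; apply: val_inj; rewrite rmorphB; apply: (rmorphB eval_at). Qed.

Lemma gen_eval_is_monoid_morphism : monoid_morphism gen_eval.
Proof.
split; first by apply: val_inj; rewrite rmorph1; apply: (rmorph1 eval_at).
by move=> p q; apply: val_inj; rewrite rmorphM; apply: (rmorphM eval_at).
Qed.

HB.instance Definition _ := GRing.isZmodMorphism.Build _ _ gen_eval gen_eval_is_zmod_morphism.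
HB.instance Definition _ :=
  GRing.isMonoidMorphism.Build _ _ gen_eval gen_eval_is_monoid_morphism.

Definition gen_emb : {rmorphism vf_car k -> vf_car gen_vf} := gen_eval \o polyC.

Lemma gen_emb_isometry c : vf_abs (gen_emb c) = vf_abs c.
Proof. by rewrite -(ext_isom K) -eval_atC. Qed.

Definition gen_ext : Ext k := {| ext_fld := gen_vf; ext_isom := gen_emb_isometry |}.

Definition gen_incl : {rmorphism vf_car gen_ext -> vf_car K} := closure_incl _ _ _ _.

Lemma gen_incl_emb c : gen_incl (ext_emb gen_ext c) = ext_emb K c.
Proof. exact: eval_atC. Qed.

Lemma gen_incl_eval p : gen_incl (gen_eval p) = eval_at p.
Proof. by []. Qed.

Lemma gen_ext_Hmodel : @Hmodel k (fun p => vf_abs (eval_at p)) gen_ext gen_eval.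
Proof.
split=> //; split=> // x e /(closure_memP _ _ (valP x)) [_ [[p [q [hq ->]]] hx]].
exists p, q; split; first by move=> /(congr1 val); rewrite rmorph0; apply/eqP.
by rewrite /= /closure_abs rmorphB fmorph_div.
Qed.

End GeneratedExtension.

Section TensorMap.
Variables (k : ValField) (A : BanachAlg k) (L K : Ext k).
Variable f : {rmorphism vf_car L -> vf_car K}.
Hypotheses (f_emb : forall c, f (ext_emb L c) = ext_emb K c)
  (f_isometry : forall x, vf_abs (f x) = vf_abs x).

Definition tens_map (w : tens A L) : tens A K := [seq (p.1, f p.2) | p <- w].

Lemma tstep_map x y : tstep x y -> tstep (tens_map x) (tens_map y).
Proof.
case=> [a1 a2 b|a b1 b2|c a b|b|x1 y1] /=.
- exact: ts_addl.
- by rewrite rmorphD; apply: ts_addr.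
- by rewrite rmorphM f_emb; apply: ts_scal.
- exact: ts_zero.
- exact: ts_swap.
Qed.

Lemma teq_map z w : teq z w -> teq (tens_map z) (tens_map w).
Proof.
elim=> [x y [u [v [x' [y' [hs [-> ->]]]]]] | x | x y _ IH | x y z' _ IH1 _ IH2].
- apply: rst_step; exists (tens_map u), (tens_map v), (tens_map x'), (tens_map y').
  by rewrite /tens_map !map_cat; split; first exact: tstep_map.
- exact: rst_refl.
- exact: rst_sym.
- exact: rst_trans IH1 IH2.
Qed.

Lemma cost_sum_map w : cost_sum (tens_map w) = cost_sum w.
Proof. by elim: w => //= p w ->; rewrite f_isometry. Qed.

Lemma cost_max_map w : cost_max (tens_map w) = cost_max w.
Proof. by elim: w => //= p w ->; rewrite f_isometry. Qed.

Lemma tsub_map z w : tens_map (tsub z w) = tsub (tens_map z) (tens_map w).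
Proof. by rewrite /tsub /tens_map map_cat -!map_comp. Qed.

Lemma tmul_map z w : tens_map (tmul z w) = tmul (tens_map z) (tens_map w).
Proof.
rewrite /tmul /tens_map; elim: z => //= p z IH.
by rewrite map_cat IH -!map_comp; congr (_ ++ _); apply: eq_map => q /=; rewrite rmorphM.
Qed.

Lemma tone_map : tens_map (tone A L) = tone A K.
Proof. by rewrite /tens_map /= rmorph1. Qed.

Lemma res_elt_map a x : tens_map (res_elt a x) = res_elt a (f x).
Proof. by rewrite /tens_map /= rmorph1. Qed.

Variables (costL : tens A L -> R) (costK : tens A K -> R).
Hypothesis cost_map : forall w, costK (tens_map w) = costL w.

Lemma snorm_lt_map z e : snorm_lt costL z e -> snorm_lt costK (tens_map z) e.
Proof. by move=> [w [hw he]]; exists (tens_map w); rewrite cost_map; split=> //; apply: teq_map. Qed.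

Lemma cinvertible_map x : cinvertible costL x -> cinvertible costK (tens_map x).
Proof.
move=> [u [hc hi]]; exists (tens_map \o u); split.
- move=> e /hc [N hN]; exists N => m n hm hn.
  by rewrite /= -tsub_map; apply: snorm_lt_map; apply: hN.
- move=> e /hi [N hN]; exists N => n /hN [h1 h2].
  by rewrite /= -tmul_map -tone_map -tsub_map -tmul_map -tsub_map; split; apply: snorm_lt_map.
Qed.

End TensorMap.

(* If the completion is the zero ring, every element is invertible there. *)
Lemma cnonzero_of_not_cinvertible (k : ValField) (A : BanachAlg k) (K : Ext k)
    (cost : tens A K -> R) x :
  ~ cinvertible cost x -> cnonzero cost.
Proof.
move=> hx; apply: NNPP => hz; apply: hx.
have small z e : Rlt R0 e -> snorm_lt cost z e.
  by move=> he; apply: NNPP => hn; apply: hz; exists z, e.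
exists (fun _ => [::]); split=> e he; exists 0%N => *; last split; exact: small.
Qed.

Section PolyAbs.
Variables (k : ValField) (L : Ext k) (phi : {rmorphism {poly vf_car k} -> vf_car L}).

Lemma rmorph_Upsilon p : phi (Upsilon k p) = (map_poly intr p).[phi 'X].
Proof.
rewrite /Upsilon; elim/poly_ind: p => [|p c IH]; first by rewrite !rmorph0 horner0.
rewrite !(rmorphD, rmorphM) /= !map_polyX !map_polyC /= hornerMXaddC IH.
by rewrite (rmorph_int (polyC : {rmorphism vf_car k -> {poly vf_car k}})) rmorph_int.
Qed.

Lemma Upsilon_tilde_abs_rmorph : Upsilon_tilde (fun p => vf_abs (phi p)) = mu (phi 'X).
Proof. by apply: functional_extensionality => p; rewrite /Upsilon_tilde rmorph_Upsilon. Qed.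

Lemma in_A1_abs_rmorph : (forall c, phi c%:P = ext_emb L c) ->
  in_A1 (fun p => vf_abs (phi p)).
Proof.
move=> phiC; split; last by move=> c; rewrite phiC ext_isom; apply: Rle_refl.
split; [|split; [|split; [|split]]] => [x||x|x y|x y].
- exact: vf_abs_ge0.
- by rewrite rmorph0 vf_abs0.
- by rewrite rmorphN vf_absN.
- by rewrite rmorphD; apply: vf_absD.
- by rewrite rmorphM vf_absM.
Qed.

End PolyAbs.

Section Spectra.
Variables (k : ValField) (A : BanachAlg k) (a : ba_car A).

Lemma Upsilon_tilde_Hmodel g (L : Ext k) phi :
  @Hmodel k g L phi -> Upsilon_tilde g = mu (phi 'X).
Proof.
move=> [_ [habs _]]; rewrite -Upsilon_tilde_abs_rmorph.
by congr Upsilon_tilde; apply: functional_extensionality => p; rewrite habs.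
Qed.

Lemma gen_ext_not_cinvertible (K : Ext k) (s : vf_car K)
    (costK : tens A K -> R) (cost : tens A (gen_ext s) -> R) :
  (forall w, costK (tens_map (gen_incl s) w) = cost w) ->
  ~ cinvertible costK (res_elt a s) -> ~ cinvertible cost (@res_elt k A (gen_ext s) a (gen_eval s 'X)).
Proof.
move=> hcost hK /(cinvertible_map (@gen_incl_emb _ _ s) hcost); apply: contra_not hK.
by rewrite res_elt_map gen_incl_eval eval_atX.
Qed.

Lemma Sigma_sigma_Ber g : Sigma a g -> sigma_Ber a (Upsilon_tilde g).
Proof.
move=> [_ [L [phi [hm hni]]]]; exists L, (phi 'X).
by split=> //; apply: Upsilon_tilde_Hmodel hm.
Qed.

Lemma Sigma_um_sigma_um g : Sigma_um a g -> sigma_um a (Upsilon_tilde g).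
Proof.
move=> [_ [L [phi [hm hni]]]]; exists L, (phi 'X).
by split=> //; apply: Upsilon_tilde_Hmodel hm.
Qed.

Lemma sigma_Ber_Sigma f : sigma_Ber a f -> exists g, Sigma a g /\ f = Upsilon_tilde g.
Proof.
move=> [K [s [-> hni]]]; exists (fun p => vf_abs (eval_at s p)).
rewrite Upsilon_tilde_abs_rmorph eval_atX; split=> //.
split; first exact/in_A1_abs_rmorph/eval_atC.
exists (gen_ext s), (gen_eval s); split; first exact: gen_ext_Hmodel.
by apply: gen_ext_not_cinvertible hni => w; apply: cost_sum_map.
Qed.

Lemma sigma_um_Sigma_um f : sigma_um a f -> exists g, Sigma_um a g /\ f = Upsilon_tilde g.
Proof.
move=> [K [s [-> [_ hni]]]]; exists (fun p => vf_abs (eval_at s p)).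
rewrite Upsilon_tilde_abs_rmorph eval_atX; split=> //.
split; first exact/in_A1_abs_rmorph/eval_atC.
exists (gen_ext s), (gen_eval s); split; first exact: gen_ext_Hmodel.
have hni' :
    ~ cinvertible (@cost_max k A (gen_ext s)) (@res_elt k A (gen_ext s) a (gen_eval s 'X)).
  by apply: gen_ext_not_cinvertible hni => w; apply: cost_max_map.
by split=> //; apply: cnonzero_of_not_cinvertible hni'.
Qed.

End Spectra.

Unset Implicit Arguments.

Theorem lemma4p12 (k : ValField) (A : BanachAlg k) (a : ba_car A) :
  (forall f : {poly int} -> R,
     (exists g, @Sigma k A a g /\ f = @Upsilon_tilde k g) <-> @sigma_Ber k A a f) /\
  (forall f : {poly int} -> R,
     (exists g, @Sigma_um k A a g /\ f = @Upsilon_tilde k g) <-> @sigma_um k A a f).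
Proof.
split=> f; split.
- by move=> [g [hg ->]]; apply: Sigma_sigma_Ber.
- exact: sigma_Ber_Sigma.
- by move=> [g [hg ->]]; apply: Sigma_um_sigma_um.
- exact: sigma_um_Sigma_um.
Qed.
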